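(* Let $F$ be an Archimedean vector lattice with universal completion $F^{u}$, and let $E$ be a regular sublattice of $F$. Then the order closure $\overline{E}^{F^{u}}_{o}$ of $E$ viewed as a sublattice of $F^{u}$ is the universal completion of $E$ (i.e. it is universally complete and contains $E$ as an order dense sublattice), and $\overline{E}^{F}_{o}=\overline{E}^{F^{u}}_{o}\cap F$.
   Context: An order complete vector lattice is universally complete if every set of pairwise disjoint elements is order bounded. The universal completion $F^u$ of an Archimedean $F$ is the (unique) universally complete vector lattice containing $F$ as an order dense sublattice. Order convergence: a net converges to $f$ if there is a set $G$ with $\bigwedge G=0$ such that for each $g\in G$ the net is eventually in $[f-g,f+g]$. A set is order closed if it contains order limits of all its nets; the order closure $\overline{E}_o$ (in a given ambient lattice) is the intersection of all order closed sets containing $E$. A sublattice $E\subset F$ is regular if $\bigwedge_E G=0$ implies $\bigwedge_F G=0$ for all $G\subset E$; it is order dense in $H\supset E$ if each $h>0$ in $H$ dominates some $e\in E$ with $e>0$. *)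

From HB Require Import structures.
From mathcomp Require Import all_boot all_order all_algebra.
From mathcomp Require Import reals.
Set Implicit Arguments. Unset Strict Implicit. Unset Printing Implicit Defensive.
Import Order.TTheory GRing.Theory Num.Theory.
Local Open Scope ring_scope.

Section VL.
Context {R : realType} {V : lmodType R} (le : V -> V -> Prop).

Definition is_upper_in (S G : V -> Prop) (x : V) : Prop :=
  S x /\ forall g, G g -> le g x.
Definition is_lower_in (S G : V -> Prop) (x : V) : Prop :=
  S x /\ forall g, G g -> le x g.
Definition is_sup_in (S G : V -> Prop) (x : V) : Prop :=
  is_upper_in S G x /\ forall y, is_upper_in S G y -> le x y.
Definition is_inf_in (S G : V -> Prop) (x : V) : Prop :=
  is_lower_in S G x /\ forall y, is_lower_in S G y -> le y x.

Definition setAll : V -> Prop := fun _ => True.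
Definition pair2 (x y : V) : V -> Prop := fun z => z = x \/ z = y.

Record vector_lattice : Prop := {
  vl_refl : forall x, le x x;
  vl_antisym : forall x y, le x y -> le y x -> x = y;
  vl_trans : forall x y z, le x y -> le y z -> le x z;
  vl_add : forall x y z, le x y -> le (x + z) (y + z);
  vl_scale : forall (a : R) x y, 0 <= a -> le x y -> le (a *: x) (a *: y);
  vl_sup : forall x y, exists s, is_sup_in setAll (pair2 x y) s }.

Record sublattice (S : V -> Prop) : Prop := {
  sl_0 : S 0;
  sl_add : forall x y, S x -> S y -> S (x + y);
  sl_scale : forall (a : R) x, S x -> S (a *: x);
  sl_sup : forall x y s, S x -> S y -> is_sup_in setAll (pair2 x y) s -> S s }.

Definition incl (A B : V -> Prop) : Prop := forall x, A x -> B x.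

Definition archimedean_in (S : V -> Prop) : Prop :=
  forall x y, S x -> S y -> le 0 x -> (forall n : nat, le (n%:R *: x) y) -> x = 0.

Definition order_complete_in (S : V -> Prop) : Prop :=
  forall G, incl G S -> (exists g, G g) -> (exists u, is_upper_in S G u) ->
    exists s, is_sup_in S G s.

Definition is_abs (x a : V) : Prop := is_sup_in setAll (pair2 x (- x)) a.
Definition disjoint (x y : V) : Prop :=
  forall a b, is_abs x a -> is_abs y b -> is_inf_in setAll (pair2 a b) 0.

Definition order_bounded_in (S G : V -> Prop) : Prop :=
  exists l u, S l /\ S u /\ forall g, G g -> le l g /\ le g u.

Definition universally_complete_in (S : V -> Prop) : Prop :=
  order_complete_in S /\
  forall D, incl D S -> (forall x y, D x -> D y -> x <> y -> disjoint x y) ->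
    order_bounded_in S D.

Definition lt (x y : V) : Prop := le x y /\ x <> y.

Definition order_dense_in (E H : V -> Prop) : Prop :=
  forall h, H h -> lt 0 h -> exists e, E e /\ lt 0 e /\ le e h.

Definition regular_in (E F : V -> Prop) : Prop :=
  forall G, incl G E -> is_inf_in E G 0 -> is_inf_in F G 0.

Definition directed (I : Type) (leI : I -> I -> Prop) : Prop :=
  inhabited I /\ (forall i, leI i i) /\
  (forall i j k, leI i j -> leI j k -> leI i k) /\
  (forall i j, exists k, leI i k /\ leI j k).

Definition order_converges_in (S : V -> Prop) (I : Type) (leI : I -> I -> Prop)
    (x : I -> V) (f : V) : Prop :=
  exists G, incl G S /\ is_inf_in S G 0 /\
    forall g, G g -> exists i0, forall i, leI i0 i ->
      le (f - g) (x i) /\ le (x i) (f + g).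

Definition order_closed_in (S A : V -> Prop) : Prop :=
  incl A S /\
  forall (I : Type) (leI : I -> I -> Prop) (x : I -> V) (f : V),
    directed leI -> (forall i, A (x i)) -> S f ->
    order_converges_in S leI x f -> A f.

Definition order_closure_in (S E : V -> Prop) : V -> Prop :=
  fun v => forall A, order_closed_in S A -> incl E A -> A v.

Definition universal_completion_of (E U : V -> Prop) : Prop :=
  sublattice U /\ universally_complete_in U /\ incl E U /\ sublattice E /\
  order_dense_in E U.

End VL.

(* Write C for the order closure of E in F^u. The lattice-linear operations are
   order continuous in each variable, and an existing supremum is the order limit
   of the upward directed net of elements of C below it; so C is a universally
   complete sublattice of F^u.
   Since E is regular in F^u, which is Archimedean, a supremum of elements of E
   that is dominated by an element of E is also the infimum of the elements of E
   above it. With this, being the supremum of the elements of E below oneself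
   passes to order limits of nets bounded in E, so x^+ /\ e has this property for
   x in C and 0 <= e in E. An element disjoint from E is disjoint from C, hence
   E is order dense in C, and then every 0 <= v in C is the supremum of the
   elements of E below it.
   For v in C /\ F, writing v = v^+ - v^- turns this into a net from E that
   converges to v in F; conversely C /\ F is order closed in F because F, being
   order dense in F^u, is regular in it. *)

From HB Require Import structures.
From mathcomp Require Import all_boot all_order all_algebra.
From mathcomp Require Import reals.
From Stdlib Require Import Classical ClassicalEpsilon.
Set Implicit Arguments. Unset Strict Implicit. Unset Printing Implicit Defensive.
Import Order.TTheory GRing.Theory Num.Theory.
Local Open Scope ring_scope.

Section VectorLattice.
Variables (R : realType) (V : lmodType R) (le : V -> V -> Prop).
Hypothesis VL : vector_lattice le.
Local Notation "x ⊑ y" := (le x y) (at level 70).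
Local Notation SA := (setAll (V:=V)).
Implicit Types (x y z w g : V) (G : V -> Prop).

Lemma levv x : x ⊑ x. Proof. exact: vl_refl VL x. Qed.
Lemma lev_trans y x z : x ⊑ y -> y ⊑ z -> x ⊑ z.
Proof. by move=> h1 h2; exact: (vl_trans VL h1 h2). Qed.
Lemma lev_anti x y : x ⊑ y -> y ⊑ x -> x = y.
Proof. by move=> h1 h2; exact: (vl_antisym VL h1 h2). Qed.

Lemma levD2r z x y : x + z ⊑ y + z <-> x ⊑ y.
Proof. by split=> [/(vl_add VL (- z))|/(vl_add VL z)] //; rewrite !addrK. Qed.
Lemma levD2l z x y : z + x ⊑ z + y <-> x ⊑ y.
Proof. by rewrite ![z + _]addrC; exact: levD2r. Qed.
Lemma levD x1 y1 x2 y2 : x1 ⊑ y1 -> x2 ⊑ y2 -> x1 + x2 ⊑ y1 + y2.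
Proof. by move=> /(levD2r x2) h1 /(levD2l y1) h2; exact: lev_trans h1 h2. Qed.
Lemma levBrDr x y z : x ⊑ z - y <-> x + y ⊑ z.
Proof. by rewrite -(levD2r y) subrK. Qed.
Lemma levBrDl x y z : x ⊑ z - y <-> y + x ⊑ z.
Proof. by rewrite levBrDr addrC. Qed.
Lemma levBlDr x y z : x - y ⊑ z <-> x ⊑ z + y.
Proof. by rewrite -(levD2r y) subrK. Qed.
Lemma subv_ge0 x y : 0 ⊑ y - x <-> x ⊑ y.
Proof. by rewrite levBrDr add0r. Qed.
Lemma subv_le0 x y : x - y ⊑ 0 <-> x ⊑ y.
Proof. by rewrite levBlDr add0r. Qed.
Lemma levN2 x y : - x ⊑ - y <-> y ⊑ x.
Proof. by rewrite -(levD2r (x + y)) addKr [- y + _]addrC addrK. Qed.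
Lemma levZ (a : R) x y : 0 <= a -> x ⊑ y -> a *: x ⊑ a *: y.
Proof. by move=> a0 h; exact: (vl_scale VL a0 h). Qed.

Definition join x y : V :=
  proj1_sig (constructive_indefinite_description _ (vl_sup VL x y)).

Lemma join_sup x y : is_sup_in le SA (pair2 x y) (join x y).
Proof. by rewrite /join; case: constructive_indefinite_description. Qed.
Lemma join_ubl x y : x ⊑ join x y.
Proof. by have [[_ ub] _] := join_sup x y; apply: ub; left. Qed.
Lemma join_ubr x y : y ⊑ join x y.
Proof. by have [[_ ub] _] := join_sup x y; apply: ub; right. Qed.
Lemma join_lub x y z : x ⊑ z -> y ⊑ z -> join x y ⊑ z.
Proof. by move=> xz yz; have [_ lub] := join_sup x y; apply: lub; split=> // g [] ->. Qed.
Lemma sup_pairE x y s : is_sup_in le SA (pair2 x y) s -> s = join x y.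
Proof.
move=> [[_ ub] lub]; apply: lev_anti.
  by apply: lub; split=> // g [] ->; [exact: join_ubl|exact: join_ubr].
by apply: join_lub; apply: ub; [left|right].
Qed.
Lemma joinC x y : join x y = join y x.
Proof.
by apply: lev_anti; apply: join_lub;
  [exact: join_ubr|exact: join_ubl|exact: join_ubr|exact: join_ubl].
Qed.
Lemma join_mono x1 x2 y1 y2 : x1 ⊑ y1 -> x2 ⊑ y2 -> join x1 x2 ⊑ join y1 y2.
Proof.
move=> h1 h2; apply: join_lub.
  exact: lev_trans h1 (join_ubl _ _).
exact: lev_trans h2 (join_ubr _ _).
Qed.
Lemma joinDr z x y : join (x + z) (y + z) = join x y + z.
Proof.
apply: lev_anti.
  by apply: join_lub; apply/levD2r; [exact: join_ubl|exact: join_ubr].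
by apply/levBrDr/join_lub; apply/levBrDr; [exact: join_ubl|exact: join_ubr].
Qed.
Lemma join_idPl x y : y ⊑ x -> join x y = x.
Proof.
by move=> yx; apply: lev_anti; [apply: join_lub => //; apply: levv|apply: join_ubl].
Qed.

Definition meet x y : V := - join (- x) (- y).

Lemma meet_lbl x y : meet x y ⊑ x.
Proof. by apply/levN2; rewrite opprK; apply: join_ubl. Qed.
Lemma meet_lbr x y : meet x y ⊑ y.
Proof. by apply/levN2; rewrite opprK; apply: join_ubr. Qed.
Lemma meet_glb x y z : z ⊑ x -> z ⊑ y -> z ⊑ meet x y.
Proof. by move=> zx zy; apply/levN2; rewrite opprK; apply: join_lub; apply/levN2. Qed.
Lemma meetC x y : meet x y = meet y x.
Proof. by rewrite /meet joinC. Qed.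
Lemma meet_idPl x y : x ⊑ y -> meet x y = x.
Proof.
by move=> xy; apply: lev_anti; [apply: meet_lbl|apply: meet_glb => //; apply: levv].
Qed.

Definition abs x := join x (- x).

Lemma abs_ge0 x : 0 ⊑ abs x.
Proof.
have sum_ge0 : x - x ⊑ abs x + abs x by apply: levD; [exact: join_ubl|exact: join_ubr].
rewrite subrr -mulr2n -scaler_nat in sum_ge0.
have half_ge0 : (0 : R) <= 2^-1 by rewrite invr_ge0 ler0n.
have := levZ half_ge0 sum_ge0.
by rewrite scaler0 scalerA mulVf ?scale1r // pnatr_eq0.
Qed.
Lemma abs_idP x : 0 ⊑ x -> abs x = x.
Proof.
move=> x0; apply: join_idPl; apply: (lev_trans _ x0).
by apply/levN2; rewrite oppr0 opprK.
Qed.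
Lemma join0_sub_joinN0 x : join x 0 - join (- x) 0 = x.
Proof.
have -> : join (- x) 0 = join 0 x - x by rewrite -joinDr sub0r subrr.
by rewrite opprB joinC addrCA subrr addr0.
Qed.

Definition within g x y := x - g ⊑ y /\ y ⊑ x + g.

Lemma within_refl g x : 0 ⊑ g -> within g x x.
Proof.
move=> g0; split; last by rewrite -{1}[x]addr0; apply/levD2l.
by rewrite -{2}[x]subr0; apply/levD2l/levN2.
Qed.
Lemma within_opp g x y : within g x y -> within g (- x) (- y).
Proof. by move=> [lo hi]; split; [rewrite -opprD|rewrite addrC -opprB]; apply/levN2. Qed.
Lemma within_addr g c x y : within g x y -> within g (x + c) (y + c).
Proof. by move=> [lo hi]; split; rewrite addrAC; apply/levD2r. Qed.
Lemma within_scale (a : R) g x y : 0 <= a -> within g x y ->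
  within (a *: g) (a *: x) (a *: y).
Proof. by move=> a0 [lo hi]; split; [rewrite -scalerBr|rewrite -scalerDr]; apply: levZ. Qed.
Lemma within_join g x1 x2 y1 y2 : within g x1 y1 -> within g x2 y2 ->
  within g (join x1 x2) (join y1 y2).
Proof. by move=> [lo1 hi1] [lo2 hi2]; split; rewrite -joinDr; apply: join_mono. Qed.
Lemma within_meet g x1 x2 y1 y2 : within g x1 y1 -> within g x2 y2 ->
  within g (meet x1 x2) (meet y1 y2).
Proof. by move=> h1 h2; apply/within_opp/within_join; apply: within_opp. Qed.
Lemma within_abs g x y : within g x y -> within g (abs x) (abs y).
Proof. by move=> h; apply: within_join => //; apply: within_opp. Qed.
Lemma within_add g1 g2 x1 x2 y1 y2 : within g1 x1 y1 -> within g2 x2 y2 ->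
  within (g1 + g2) (x1 + x2) (y1 + y2).
Proof.
by move=> [lo1 hi1] [lo2 hi2]; split; rewrite ?opprD addrACA; apply: levD.
Qed.
Lemma within_interval x0 x y : x0 ⊑ x -> x ⊑ y -> within (y - x0) y x.
Proof.
move=> x0x xy; split; first by rewrite subKr.
apply: (lev_trans xy); rewrite -{1}[y]addr0.
exact/levD2l/subv_ge0/(lev_trans x0x xy).
Qed.

Lemma inf0_ge0 G g : is_inf_in le SA G 0 -> G g -> 0 ⊑ g.
Proof. by move=> [[_ lb] _]; apply: lb. Qed.
Lemma inf0_glb G w : is_inf_in le SA G 0 -> (forall g, G g -> w ⊑ g) -> w ⊑ 0.
Proof. by move=> [_ glb] wlb; apply: glb. Qed.
Lemma lev_inf0D G x y : is_inf_in le SA G 0 -> (forall g, G g -> x ⊑ y + g) -> x ⊑ y.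
Proof.
move=> G0 xy; apply/subv_le0; apply: (inf0_glb G0) => g Gg.
by apply/levBlDr; rewrite addrC; apply: xy.
Qed.
Lemma within_inf0_eq G x y : is_inf_in le SA G 0 ->
  (forall g, G g -> within g x y) -> x = y.
Proof.
move=> G0 xy; apply: lev_anti; apply: (lev_inf0D G0) => g /xy [lo hi] //.
by apply/levBlDr.
Qed.

Lemma inf_in_sub S G m : incl G S -> S m ->
  is_inf_in le SA G m -> is_inf_in le S G m.
Proof. by move=> GS Sm [[_ lb] glb]; split=> // w [_ wlb]; apply: glb. Qed.
Lemma sup_in_sub S G m : incl G S -> S m ->
  is_sup_in le SA G m -> is_sup_in le S G m.
Proof. by move=> GS Sm [[_ ub] lub]; split=> // w [_ wub]; apply: lub. Qed.

Lemma sup_ext G H s : (forall x, G x <-> H x) ->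
  is_sup_in le SA G s -> is_sup_in le SA H s.
Proof.
move=> GH [[_ ub] lub]; split; first by split=> // x /GH /ub.
by move=> w [_ wub]; apply: lub; split=> // x /GH /wub.
Qed.
Lemma inf_ext G H m : (forall x, G x <-> H x) ->
  is_inf_in le SA G m -> is_inf_in le SA H m.
Proof.
move=> GH [[_ lb] glb]; split; first by split=> // x /GH /lb.
by move=> w [_ wlb]; apply: glb; split=> // x /GH /wlb.
Qed.
Lemma sup_opp G s : is_sup_in le SA G s -> is_inf_in le SA (fun z => G (- z)) (- s).
Proof.
move=> [[_ ub] lub]; split; first by split=> // z /ub ?; apply/levN2; rewrite opprK.
move=> w [_ wlb]; apply/levN2; rewrite opprK; apply: lub; split=> // x Gx.
by apply/levN2; rewrite opprK; apply: wlb; rewrite opprK.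
Qed.
Lemma inf_opp G m : is_inf_in le SA G m -> is_sup_in le SA (fun z => G (- z)) (- m).
Proof.
move=> [[_ lb] glb]; split; first by split=> // z /lb ?; apply/levN2; rewrite opprK.
move=> w [_ wub]; apply/levN2; rewrite opprK; apply: glb; split=> // x Gx.
by apply/levN2; rewrite opprK; apply: wub; rewrite opprK.
Qed.

Lemma sup_sub_inf0 D s : is_sup_in le SA D s ->
  is_inf_in le SA (fun g => exists2 d, D d & g = s - d) 0.
Proof.
move=> [[_ ub] lub]; split; first by split=> // g [d /ub ? ->]; apply/subv_ge0.
move=> w [_ wlb].
have : s ⊑ s - w.
  apply: lub; split=> // d Dd.
  by apply/levBrDr; rewrite addrC -levBrDr; apply: wlb; exists d.
by move/levBrDr; rewrite -{2}[s]addr0 => /levD2l.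
Qed.
Lemma sup_add A B p q : is_sup_in le SA A p -> is_sup_in le SA B q ->
  is_sup_in le SA (fun z => exists a b, [/\ A a, B b & z = a + b]) (p + q).
Proof.
move=> [[_ ubA] lubA] [[_ ubB] lubB].
split; first by split=> // z [a [b [/ubA ? /ubB ? ->]]]; apply: levD.
move=> u [_ ub]; apply/levBrDr/lubA; split=> // a Aa.
apply/levBrDr; rewrite addrC -levBrDr; apply: lubB; split=> // b Bb.
by apply/levBrDr; rewrite addrC; apply: ub; exists a, b.
Qed.
Lemma inf0_scale (a : R) G : 0 < a -> is_inf_in le SA G 0 ->
  is_inf_in le SA (fun h => exists2 g, G g & h = a *: g) 0.
Proof.
move=> a0 G0; split.
  split=> // _ [g /(inf0_ge0 G0) g0 ->].
  by rewrite -(scaler0 _ a); apply: levZ (ltW a0) g0.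
move=> w [_ wlb]; rewrite -[w](scalerKV (lt0r_neq0 a0)) -(scaler0 _ a).
apply: levZ (ltW a0) _; apply: (inf0_glb G0) => g Gg.
rewrite -[g](scalerK (lt0r_neq0 a0)); apply: levZ; first by rewrite invr_ge0 ltW.
by apply: wlb; exists g.
Qed.

Section Sublattice.
Variable S : V -> Prop.
Hypothesis SS : sublattice le S.

Lemma sl_opp x : S x -> S (- x).
Proof. by move=> Sx; have := sl_scale SS (-1) Sx; rewrite scaleN1r. Qed.
Lemma sl_sub x y : S x -> S y -> S (x - y).
Proof. by move=> Sx Sy; apply: (sl_add SS Sx); apply: sl_opp. Qed.
Lemma sl_join x y : S x -> S y -> S (join x y).
Proof. by move=> Sx Sy; exact: (sl_sup SS Sx Sy (join_sup x y)). Qed.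
Lemma sl_meet x y : S x -> S y -> S (meet x y).
Proof. by move=> Sx Sy; apply/sl_opp/sl_join; apply: sl_opp. Qed.

End Sublattice.

Section OrderComplete.
Hypothesis OC : order_complete_in le SA.

Lemma sup_ex G : (exists g, G g) -> (exists u, forall g, G g -> g ⊑ u) ->
  exists s, is_sup_in le SA G s.
Proof. by move=> Gn0 [u ub]; apply: OC => //; exists u. Qed.
Lemma inf_ex G : (exists g, G g) -> (exists l, forall g, G g -> l ⊑ g) ->
  exists m, is_inf_in le SA G m.
Proof.
move=> [g Gg] [l lb].
have [s /sup_opp sNG] : exists s, is_sup_in le SA (fun z => G (- z)) s.
  apply: sup_ex; first by exists (- g); rewrite opprK.
  by exists (- l) => z /lb lz; rewrite -levN2 opprK.
by exists (- s); apply: inf_ext sNG => z; rewrite opprK.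
Qed.

Lemma order_complete_archimedean : archimedean_in le SA.
Proof.
move=> e v _ _ e0 nev.
have [s [[_ ub] lub]] :
    exists s, is_sup_in le SA (fun z => exists n : nat, z = n%:R *: e) s.
  by apply: sup_ex; [exists 0, 0%N; rewrite scale0r|exists v => z [n ->]].
have : s ⊑ s - e.
  apply: lub; split=> // z [n ->]; apply/levBrDr.
  by rewrite -{2}[e]scale1r -scalerDl -mulrSr; apply: ub; exists n.+1.
by move/levBrDr; rewrite -{2}[s]addr0 => /levD2l e_le0; apply: lev_anti.
Qed.

End OrderComplete.

Lemma order_dense_regular F : order_dense_in le F SA -> regular_in le F SA.
Proof.
move=> Fdense G GF [[F0 lb] glb]; split; first by split.
move=> w [_ wlb].
have pos_lb g : G g -> join w 0 ⊑ g.
  by move=> Gg; apply: join_lub; [apply: wlb|apply: lb].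
have [pos0|/eqP pos_n0] := boolP (join w 0 == 0).
  by rewrite -(eqP pos0); apply: join_ubl.
have [f [Ff [[f0 fn0] fw]]] := Fdense _ I (conj (join_ubr w 0) (nesym pos_n0)).
case: fn0; apply: (lev_anti f0); apply: glb; split=> // g Gg.
exact: lev_trans fw (pos_lb g Gg).
Qed.

Lemma regular_trans E F H : incl E F -> regular_in le E F -> regular_in le F H ->
  regular_in le E H.
Proof. by move=> EF EFreg FHreg G GE /EFreg-/(_ GE) /FHreg; apply=> x /GE /EF. Qed.

Lemma sub_closure S E : incl E (order_closure_in le S E).
Proof. by move=> x Ex A _; apply. Qed.
Lemma closure_min S E A : order_closed_in le S A -> incl E A ->
  incl (order_closure_in le S E) A.
Proof. by move=> Acl EA x; apply. Qed.
Lemma closure_closed E : order_closed_in le SA (order_closure_in le SA E).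
Proof.
split=> // J leJ x f Jdir Cx _ xf A Acl EA.
exact: (proj2 Acl J leJ x f Jdir (fun i => Cx i A Acl EA) I xf).
Qed.

Lemma order_closed_set1 c : order_closed_in le SA (fun v => v = c).
Proof.
split=> // J leJ x f [_ [Jrefl _]] xc _ [G [_ [G0 xf]]].
apply: (within_inf0_eq G0) => g /xf [i0 near_i0].
by rewrite -(xc i0); apply: near_i0; apply: Jrefl.
Qed.

Definition lipschitz (a : R) (phi : V -> V) :=
  forall x y g, 0 ⊑ g -> within g x y -> within (a *: g) (phi x) (phi y).

Lemma cvg_lipschitz a phi J (leJ : J -> J -> Prop) (u : J -> V) f :
  0 < a -> lipschitz a phi ->
  order_converges_in le SA leJ u f ->
  order_converges_in le SA leJ (phi \o u) (phi f).
Proof.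
move=> a0 phi_lip [G [_ [G0 uf]]].
exists (fun h => exists2 g, G g & h = a *: g); split=> //; split.
  exact: inf_in_sub (inf0_scale a0 G0).
move=> _ [g Gg ->]; have [i0 near_i0] := uf g Gg.
by exists i0 => i /near_i0; apply: phi_lip; apply: inf0_ge0 G0 Gg.
Qed.

Lemma lipschitz_preimage_closed a phi A : 0 < a -> lipschitz a phi ->
  order_closed_in le SA A -> order_closed_in le SA (fun v => A (phi v)).
Proof.
move=> a0 phi_lip Acl; split=> // J leJ x f Jdir Ax _ xf.
exact: (proj2 Acl J leJ (phi \o x) (phi f) Jdir Ax I (cvg_lipschitz a0 phi_lip xf)).
Qed.

Lemma closure_lipschitz E a phi : 0 < a -> lipschitz a phi ->
  (forall x, E x -> order_closure_in le SA E (phi x)) ->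
  forall x, order_closure_in le SA E x -> order_closure_in le SA E (phi x).
Proof.
move=> a0 phi_lip phiE; apply: closure_min phiE.
exact: lipschitz_preimage_closed a0 phi_lip (closure_closed E).
Qed.

Section ClosureOfSublattice.
Variable E : V -> Prop.
Hypothesis SE : sublattice le E.
Local Notation C := (order_closure_in le SA E).

Lemma closure0 : C 0.
Proof. exact: sub_closure (sl_0 SE). Qed.

Lemma closure_opp x : C x -> C (- x).
Proof.
apply: (closure_lipschitz ltr01) => [y z g _ yz|y Ey].
  by rewrite scale1r; apply: within_opp.
exact: sub_closure (sl_opp SE Ey).
Qed.

Lemma closure_scale (a : R) x : C x -> C (a *: x).
Proof.
have scale_pos b : 0 < b -> C x -> C (b *: x).
  move=> b0; apply: (closure_lipschitz b0) => [y z g _|y Ey].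
    exact: within_scale (ltW b0).
  exact: sub_closure (sl_scale SE b Ey).
move=> Cx; case: (ltrgtP 0 a) => [a0|a0|<-]; first exact: scale_pos.
  rewrite -[a]opprK scaleNr; apply: closure_opp.
  by apply: scale_pos; rewrite ?oppr_gt0.
by rewrite scale0r; exact: closure0.
Qed.

Lemma closure_op2 (op : V -> V -> V) : commutative op ->
  (forall c, lipschitz 1 (op^~ c)) -> (forall x y, E x -> E y -> E (op x y)) ->
  forall x y, C x -> C y -> C (op x y).
Proof.
move=> opC op_lip opE.
have CE e x : E e -> C x -> C (op x e).
  move=> Ee; apply: (closure_lipschitz ltr01 (op_lip e)) => y Ey.
  exact: sub_closure (opE _ _ Ey Ee).
move=> x y Cx; rewrite opC; apply: (closure_lipschitz ltr01 (op_lip x)) => e Ee.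
by rewrite opC; apply: CE.
Qed.

Lemma closure_add x y : C x -> C y -> C (x + y).
Proof.
apply: closure_op2; [exact: addrC|move=> c u v g _|exact: (sl_add SE)].
by rewrite scale1r; apply: within_addr.
Qed.

Lemma closure_join x y : C x -> C y -> C (join x y).
Proof.
apply: closure_op2; [exact: joinC|move=> c u v g g0 uv|exact: (sl_join SE)].
by rewrite scale1r; apply: within_join => //; apply: within_refl.
Qed.

Lemma closure_sublattice : sublattice le C.
Proof.
split; [exact: closure0|exact: closure_add|move=> a x; exact: closure_scale|].
by move=> x y s Cx Cy /sup_pairE ->; apply: closure_join.
Qed.

Lemma closure_sup B s : incl B C -> (exists b, B b) -> is_sup_in le SA B s -> C s.
Proof.
move=> BC [b Bb] [[_ ubB] lubB].
pose D c := C c /\ c ⊑ s.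
have Dsup : is_sup_in le SA D s.
  split; first by split=> // c [].
  move=> u [_ ubD]; apply: lubB; split=> // c Bc.
  by apply: ubD; split; [apply: BC|apply: ubB].
pose leJ (i j : {c | D c}) := sval i ⊑ sval j.
have Jdir : directed leJ.
  split; first by constructor; exists b; split; [apply: BC|apply: ubB].
  split; first by move=> i; apply: levv.
  split; first by move=> i j k; apply: lev_trans.
  move=> [c [Cc cs]] [d [Cd ds]].
  have Dcd : D (join c d) by split; [apply: closure_join|apply: join_lub].
  by exists (exist _ _ Dcd); split; [apply: join_ubl|apply: join_ubr].
apply: (proj2 (closure_closed E) _ leJ sval s Jdir (fun i => (svalP i).1) I).
exists (fun g => exists2 d, D d & g = s - d); split=> //; split.
  exact: inf_in_sub (sup_sub_inf0 Dsup).
move=> _ [d Dd ->]; exists (exist _ d Dd) => i di.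
have [_ i_le_s] := svalP i.
split; first by rewrite subKr.
apply: (lev_trans i_le_s); rewrite -{1}[s]addr0.
by apply/levD2l/subv_ge0; apply: (proj2 Dd).
Qed.

Lemma closure_inf B m : incl B C -> (exists b, B b) -> is_inf_in le SA B m -> C m.
Proof.
move=> BC [b Bb] /inf_opp Bm; rewrite -[m]opprK; apply: closure_opp.
apply: (closure_sup _ _ Bm) => [x /BC /closure_opp|]; first by rewrite opprK.
by exists (- b); rewrite opprK.
Qed.

Lemma closure_band w : (forall f, E f -> meet (abs f) w = 0) ->
  forall h, C h -> meet (abs h) w = 0.
Proof.
move=> Ew; apply: closure_min Ew.
apply: (lipschitz_preimage_closed ltr01 _ (order_closed_set1 0)) => x y g g0 xy.
by rewrite scale1r; apply: within_meet; [apply: within_abs|apply: within_refl].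
Qed.

Lemma closure_universally_complete : universally_complete_in le SA ->
  universally_complete_in le C.
Proof.
move=> [OC UD]; split.
  move=> G GC Gn0 [u [_ ub]]; have [s s_sup] := sup_ex OC Gn0 (ex_intro _ u ub).
  by exists s; apply: sup_in_sub => //; apply: closure_sup GC Gn0 s_sup.
move=> D DC Ddisj; have [Dn0|D0] := classic (exists d, D d); last first.
  exists 0, 0; split; [exact: closure0|split; [exact: closure0|]].
  by move=> d Dd; case: D0; exists d.
have [l [u [_ [_ lu]]]] := UD D (fun _ _ => I) Ddisj.
have [s s_sup] := sup_ex OC Dn0 (ex_intro _ u (fun d Dd => proj2 (lu d Dd))).
have [m m_inf] := inf_ex OC Dn0 (ex_intro _ l (fun d Dd => proj1 (lu d Dd))).
exists m, s; split; first exact: closure_inf DC Dn0 m_inf.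
split; first exact: closure_sup DC Dn0 s_sup.
by have [[_ lb] _] := m_inf; have [[_ ub] _] := s_sup; split; [apply: lb|apply: ub].
Qed.

End ClosureOfSublattice.

Lemma closure_in_subset F E : regular_in le F SA -> incl E F ->
  incl (order_closure_in le F E) (fun v => order_closure_in le SA E v /\ F v).
Proof.
move=> FSA EF; apply: closure_min => [|x Ex]; last first.
  by split; [apply: sub_closure|apply: EF].
split=> [x []//|J leJ x f Jdir Cx Ff [G [GF [G0 xf]]]]; split=> //.
apply: (proj2 (closure_closed E) J leJ x f Jdir (fun i => (Cx i).1) I).
by exists G; split=> //; split=> //; apply: FSA.
Qed.

Definition below E y := fun f => E f /\ f ⊑ y.
Definition above E y := fun f => E f /\ y ⊑ f.
Definition sup_below E y := is_sup_in le SA (below E y) y.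
Definition inf_above E y := is_inf_in le SA (above E y) y.

Lemma sup_below_approx E G y : is_inf_in le SA G 0 ->
  (forall g, G g -> exists l, [/\ sup_below E l, y - g ⊑ l & l ⊑ y]) ->
  sup_below E y.
Proof.
move=> G0 approx; split; first by split=> // f [].
move=> z [_ zub]; apply: (lev_inf0D G0) => g /approx [l [[_ lub] yl ly]].
rewrite -levBlDr; apply: (lev_trans yl); apply: lub.
by split=> // f [Ef fl]; apply: zub; split=> //; apply: (lev_trans fl ly).
Qed.

Section RegularSublattice.
Variable E : V -> Prop.
Hypothesis SE : sublattice le E.
Hypothesis RE : regular_in le E SA.
Hypothesis OC : order_complete_in le SA.

Lemma sup_below_self y : E y -> sup_below E y.
Proof.
move=> Ey; split=> [|w [_ wub]]; first by split=> // f [].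
by apply: wub; split=> //; apply: levv.
Qed.

Lemma inf_above_opp y : inf_above E (- y) -> sup_below E y.
Proof.
move=> /inf_opp; rewrite opprK; apply: sup_ext => z.
split=> [[Ez yz]|[Ez zy]]; split; last exact/levN2.
- by rewrite -[z]opprK; apply: (sl_opp SE).
- exact/levN2.
- exact: (sl_opp SE).
Qed.

Section SupOfSubset.
Variables (D : V -> Prop) (y e : V).
Hypotheses (DE : incl D E) (Dn0 : exists d, D d) (Dy : is_sup_in le SA D y).
Hypotheses (Ee : E e) (ye : y ⊑ e).

Lemma upper_gap_inf0 :
  is_inf_in le E (fun h => exists f d, [/\ above E y f, D d & h = f - d]) 0.
Proof.
have [d0 Dd0] := Dn0; have [[_ ubD] lubD] := Dy.
have gap_ge0 f d : above E y f -> D d -> 0 ⊑ f - d.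
  by move=> [_ yf] /ubD dy; apply/subv_ge0/(lev_trans dy yf).
split; first by split; [apply: (sl_0 SE)|move=> _ [f [d [Af Dd ->]]]; apply: gap_ge0].
move=> t [Et tlb]; pose p := join t 0.
have Ep : E p := sl_join SE Et (sl_0 SE).
have p_lb f d : above E y f -> D d -> p ⊑ f - d.
  by move=> Af Dd; apply: join_lub; [apply: tlb; exists f, d|apply: gap_ge0].
(* Subtracting [p] from an upper bound of [y] in [E] gives another one, so
   [n p <= e - d0] for all [n]. *)
have e_sub_np n : above E y (e - n%:R *: p).
  elim: n => [|n [Enp ynp]]; first by rewrite scale0r subr0.
  split; first exact: (sl_sub SE Ee (sl_scale SE _ Ep)).
  rewrite -addn1 natrD scalerDl scale1r opprD addrA.
  apply: lubD; split=> // d Dd; rewrite levBrDr -levBrDl.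
  exact: (p_lb _ _ (conj Enp ynp) Dd).
have p0 : p = 0.
  apply: (@order_complete_archimedean OC p (e - d0) I I (join_ubr t 0)) => n.
  have [_ ynp] := e_sub_np n; rewrite levBrDr -levBrDl.
  exact: (lev_trans (ubD _ Dd0) ynp).
by rewrite -p0; apply: join_ubl.
Qed.

Lemma sup_inf_above : inf_above E y.
Proof.
have [[_ ubD] _] := Dy.
have gapsE : incl (fun h => exists f d, [/\ above E y f, D d & h = f - d]) E.
  by move=> _ [f [d [[Ef _] Dd ->]]]; apply: (sl_sub SE Ef (DE Dd)).
have gaps0 := RE gapsE upper_gap_inf0.
split; first by split=> // f [].
move=> w [_ wlb]; apply: (lev_inf0D gaps0) => _ [f [d [Af Dd ->]]].
rewrite addrCA -[w]addr0; apply: levD (wlb _ Af) _.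
exact/subv_ge0/ubD.
Qed.

End SupOfSubset.

Lemma inf_sup_below D y e : incl D E -> (exists d, D d) -> is_inf_in le SA D y ->
  E e -> e ⊑ y -> sup_below E y.
Proof.
move=> DE [d Dd] /inf_opp Dy Ee ey; apply: inf_above_opp.
apply: (sup_inf_above (D := fun z => D (- z)) (e := - e)) => //.
- by move=> z /DE /(sl_opp SE); rewrite opprK.
- by exists (- d); rewrite opprK.
- exact: (sl_opp SE).
- exact/levN2.
Qed.

Lemma sup_below_inf_above y e : sup_below E y -> 0 ⊑ y -> E e -> y ⊑ e ->
  inf_above E y.
Proof.
move=> y_sup y0 Ee ye; apply: (sup_inf_above (D := below E y) (e := e)) => //.
- by move=> f [].
- by exists 0; split; [apply: (sl_0 SE)|].
Qed.

Lemma sup_below_lim e J (leJ : J -> J -> Prop) (u : J -> V) y :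
  E e -> directed leJ ->
  (forall i, [/\ sup_below E (u i), 0 ⊑ u i & u i ⊑ e]) ->
  order_converges_in le SA leJ u y -> sup_below E y.
Proof.
move=> Ee [_ [Jrefl [_ Jdir]]] uP [G [_ [G0 uy]]].
apply: (sup_below_approx G0) => g Gg.
have [i0 near_i0] := uy g Gg.
pose D f := E f /\ exists2 j, leJ i0 j & u j ⊑ f.
have De : D e by split=> //; exists i0; [apply: Jrefl|have [] := uP i0].
have D_ge0 f : D f -> 0 ⊑ f.
  by move=> [_ [j _ uf]]; have [_ u0 _] := uP j; apply: (lev_trans u0 uf).
have [l [[_ lb] glb]] : exists l, is_inf_in le SA D l.
  by apply: (inf_ex OC); [exists e|exists 0].
have l_le_u j : leJ i0 j -> l ⊑ u j.
  move=> i0j; have [u_sup u0 ue] := uP j.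
  have [_ glb_j] := sup_below_inf_above u_sup u0 Ee ue.
  by apply: glb_j; split=> // f [Ef uf]; apply: lb; split=> //; exists j.
exists l; split.
- apply: (inf_sup_below (D := D) (e := 0)) => //; first by move=> f [].
  + by exists e.
  + exact: (sl_0 SE).
  + by apply: glb; split=> // f /D_ge0.
- apply: glb; split=> // f [_ [j i0j uf]].
  by have [lo _] := near_i0 j i0j; apply: (lev_trans lo uf).
- apply: (lev_inf0D G0) => h Gh; have [i1 near_i1] := uy h Gh.
  have [k [i0k i1k]] := Jdir i0 i1.
  by have [_ hi] := near_i1 k i1k; apply: (lev_trans (l_le_u k i0k) hi).
Qed.

Lemma closure_sup_below_meet x e : order_closure_in le SA E x -> E e -> 0 ⊑ e ->
  sup_below E (meet (join x 0) e).
Proof.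
move=> Cx Ee e0; pose phi v := meet (join v 0) e.
have phi_lip : lipschitz 1 phi.
  move=> v w g g0 vw; rewrite scale1r.
  exact: within_meet (within_join vw (within_refl 0 g0)) (within_refl e g0).
move: x Cx; apply: (closure_min (A := fun v => sup_below E (phi v))) => [|v Ev].
  split=> // J leJ u f Jdir Au _ uf.
  apply: (sup_below_lim Ee Jdir _ (cvg_lipschitz ltr01 phi_lip uf)) => i.
  by split; [exact: Au|apply: meet_glb e0; apply: join_ubr|apply: meet_lbr].
exact/sup_below_self/(sl_meet SE (sl_join SE Ev (sl_0 SE)) Ee).
Qed.

Lemma sup_below_pos y : sup_below E y -> 0 ⊑ y -> y <> 0 ->
  exists f, E f /\ lt le 0 f /\ f ⊑ y.
Proof.
move=> [_ lub] y0 yn0.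
have [[f [[Ef fy] f_pos]]|no_pos] := classic (exists f, below E y f /\ ~ f ⊑ 0).
  exists (join f 0); split; first exact: (sl_join SE Ef (sl_0 SE)).
  split; last exact: join_lub.
  by split; [apply: join_ubr|move=> f0; apply: f_pos; rewrite f0; apply: join_ubl].
case: yn0; apply: (lev_anti _ y0); apply: lub; split=> // f bf.
by apply: NNPP => nf; apply: no_pos; exists f.
Qed.

Local Notation C := (order_closure_in le SA E).

Lemma closure_order_dense : order_dense_in le E C.
Proof.
move=> h Ch [h0 hn0].
(* Either [h] meets some [abs f] with [f] in [E], or [h] is disjoint from [E],
   hence from [C], and in particular from itself. *)
have [[f [Ef fh]]|disj] := classic (exists f, E f /\ meet (abs f) h <> 0).
  have := closure_sup_below_meet Ch (sl_join SE Ef (sl_opp SE Ef)) (abs_ge0 f).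
  rewrite join_idPl // => m_sup.
  have [|e [Ee [e_pos em]]] := sup_below_pos m_sup (meet_glb h0 (abs_ge0 f)).
    by rewrite meetC.
  by exists e; split=> //; split=> //; apply: (lev_trans em (meet_lbl _ _)).
have hh0 : meet (abs h) h = 0.
  apply: (closure_band _ Ch) => f Ef.
  by apply: NNPP => nf; apply: disj; exists f.
by case: hn0; rewrite -hh0 abs_idP // meet_idPl //; apply: levv.
Qed.

Lemma closure_sup_below v : C v -> 0 ⊑ v -> sup_below E v.
Proof.
move=> Cv v0.
have [s s_sup] : exists s, is_sup_in le SA (below E v) s.
  by apply: (sup_ex OC); [exists 0; split; [apply: (sl_0 SE)|]|exists v => f []].
have [[_ ubs] lubs] := s_sup.
have sv : s ⊑ v by apply: lubs; split=> // f [].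
have [sv_eq|sn0] := classic (s = v); first by move: s_sup; rewrite sv_eq.
have Cs : C s.
  apply: (closure_sup SE _ _ s_sup); first by move=> f [Ef _]; apply: sub_closure.
  by exists 0; split; [apply: (sl_0 SE)|].
(* Otherwise density gives [0 < e <= v - s], and [f + e] stays below [v] for
   every [f] in [E] below [v], so that [s + e <= s]. *)
have gap_pos : lt le 0 (v - s).
  split; first exact/subv_ge0.
  by move=> /esym /subr0_eq /esym /sn0.
have [e [Ee [[e0 en0] e_gap]]] :=
  closure_order_dense (closure_add SE Cv (closure_opp SE Cs)) gap_pos.
case: en0; apply: (lev_anti e0).
have : s ⊑ s - e.
  apply: lubs; split=> // f [Ef fv]; apply/levBrDr/ubs.
  split; first exact: (sl_add SE Ef Ee).
  by rewrite -(subrKC s v); apply: levD => //; apply: ubs.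
by move/levBrDr; rewrite -{2}[s]addr0 => /levD2l.
Qed.

Lemma below2_directed p q : 0 ⊑ p -> 0 ⊑ q ->
  directed (fun i j : {ab : V * V | below E p ab.1 /\ below E q ab.2} =>
    (sval i).1 ⊑ (sval j).1 /\ (sval i).2 ⊑ (sval j).2).
Proof.
move=> p0 q0; split.
  by constructor; exists (0, 0); split; split=> //; apply: (sl_0 SE).
split; first by move=> i; split; apply: levv.
split.
  by move=> i j k [ij1 ij2] [jk1 jk2]; split; [exact: lev_trans ij1 jk1|exact: lev_trans ij2 jk2].
move=> [[a b] [[Ea ap] [Eb bq]]] [[a' b'] [[Ea' a'p] [Eb' b'q]]].
have Dj : below E p (join a a') /\ below E q (join b b').
  by split; split; [apply: (sl_join SE)|apply: join_lub|apply: (sl_join SE)|apply: join_lub].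
exists (exist _ (_, _) Dj).
by split; split; [apply: join_ubl|apply: join_ubl|apply: join_ubr|apply: join_ubr].
Qed.

Lemma closure_in_supset F v : sublattice le F -> incl E F -> C v -> F v ->
  order_closure_in le F E v.
Proof.
move=> SF EF Cv Fv A Acl EA.
pose p := join v 0; pose q := join (- v) 0.
have p_sup : sup_below E p :=
  closure_sup_below (closure_join SE Cv (closure0 SE)) (join_ubr _ _).
have q_sup : sup_below E q :=
  closure_sup_below (closure_join SE (closure_opp SE Cv) (closure0 SE)) (join_ubr _ _).
(* The net [a - b], with [a] and [b] in [E] below [v^+] and [v^-], converges
   to [v] in [F]. *)
have Jdir := below2_directed (join_ubr v 0) (join_ubr (- v) 0).
apply: (proj2 Acl _ _ (fun i => (sval i).1 - (sval i).2) v Jdir _ Fv).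
  by move=> i; have [[Ea _] [Eb _]] := svalP i; apply/EA/(sl_sub SE Ea Eb).
pose S z := exists a b, [/\ below E p a, below E q b & z = a + b].
pose G g := exists2 d, S d & g = p + q - d.
have GF : incl G F.
  move=> _ [_ [a [b [[Ea _] [Eb _] ->]]] ->].
  have Fpq : F (p + q).
    exact: (sl_add SF (sl_join SF Fv (sl_0 SF)) (sl_join SF (sl_opp SF Fv) (sl_0 SF))).
  exact/(sl_sub SF Fpq)/EF/(sl_add SE Ea Eb).
exists G; split=> //; split.
  exact: inf_in_sub GF (sl_0 SF) (sup_sub_inf0 (sup_add p_sup q_sup)).
move=> _ [_ [a0 [b0 [ba0 bb0 ->]]] ->].
exists (exist _ (a0, b0) (conj ba0 bb0)) => i [/= a0a b0b].
have [[_ ap] [_ bq]] := svalP i.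
have -> : p + q - (a0 + b0) = (p - a0) + (q - b0) by rewrite opprD addrACA.
have := within_add (within_interval a0a ap) (within_opp (within_interval b0b bq)).
by rewrite /p /q join0_sub_joinN0.
Qed.

End RegularSublattice.
End VectorLattice.

Theorem corollary9p4 (R : realType) (V : lmodType R) (le : V -> V -> Prop)
    (F E : V -> Prop) :
  vector_lattice le ->
  universally_complete_in le (setAll (V:=V)) ->
  sublattice le F -> archimedean_in le F -> order_dense_in le F (setAll (V:=V)) ->
  sublattice le E -> incl E F -> regular_in le E F ->
  universal_completion_of le E (order_closure_in le (setAll (V:=V)) E) /\
  (forall v, order_closure_in le F E v <->
             (order_closure_in le (setAll (V:=V)) E v /\ F v)).
Proof.
move=> VL UC SF _ DF SE EF RE.
have F_reg := order_dense_regular VL DF.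
have E_reg := regular_trans EF RE F_reg.
split.
  split; first exact: (closure_sublattice VL SE).
  split; first exact: (closure_universally_complete VL SE UC).
  split; first exact: sub_closure.
  by split=> //; apply: (closure_order_dense VL SE E_reg UC.1).
move=> v; split; first exact: (closure_in_subset F_reg EF).
by case; apply: (closure_in_supset VL SE E_reg UC.1 SF EF).
Qed.
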